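(* Let $d\ge 2$, $n\ge 2$, $M=(d-1)(n-1)$, and orient the $M$-cells and $(M-1)$-cells of $X(d,n)$ so that the $\mathfrak S_n$-action changes orientations according to $\operatorname{sgn}^{d-1}$ and the cellular boundary of each $M$-cell is the sum of the $(M-1)$-cells in its boundary with coefficients $+1$. Let $b$ be any $\mathfrak S_n$-equivariant integral cellular $(M-1)$-cochain on $X(d,n)$ with values in $\mathcal Z$. Then there are integers $x_1,\dots,x_{n-1}$ (namely $x_j$ is the value of $b$ on the oriented $(M-1)$-cells $\check c(\sigma_1\prec_d\cdots\sigma_j\prec_{d-1}\sigma_{j+1}\cdots\prec_d\sigma_n)$, which is independent of $\sigma$) such that the coboundary $\delta b$ takes the value \[ x_1\binom n1+x_2\binom n2+\dots+x_{n-1}\binom n{n-1} \] on every oriented $M$-cell of $X(d,n)$.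
   Context: $X(d,n)$ is the regular CW complex with cells $\check c(\sigma,\mathbf i)$ indexed by strings $(\sigma_1\prec_{i_1}\cdots\prec_{i_{n-1}}\sigma_n)$, $\sigma\in\mathfrak S_n$, $\mathbf i\in\{1,\dots,d\}^{n-1}$, of dimension $\sum_j i_j-(n-1)$; $\mathfrak S_n$ acts freely by $\pi\cdot(\sigma,\mathbf i)=(\pi\sigma,\mathbf i)$. Face relation: $(\sigma,\mathbf i)\preceq(\sigma',\mathbf i')$ iff for all letters $a$ before $b$ in $\sigma'$: either $a$ before $b$ in $\sigma$ with $m_{\sigma,\mathbf i}(a,b)\le m_{\sigma',\mathbf i'}(a,b)$, or $b$ before $a$ in $\sigma$ with $m_{\sigma,\mathbf i}(a,b)<m_{\sigma',\mathbf i'}(a,b)$, where for letters at positions $p<q$ of $\sigma$, $m_{\sigma,\mathbf i}=\min\{i_p,\dots,i_{q-1}\}$. In particular the $M$-cells are $\check c(\sigma_1\prec_d\cdots\prec_d\sigma_n)$, the $(M-1)$-cells are $\check c(\sigma_1\prec_d\cdots\sigma_j\prec_{d-1}\sigma_{j+1}\cdots\prec_d\sigma_n)$, $1\le j<n$. $\mathcal Z\cong\mathbb Z$ is the $\mathfrak S_n$-module $H_{M-1}(S(W_n^{\oplus(d-1)});\mathbb Z)$, on which $\pi$ acts by multiplication by $(\operatorname{sgn}\pi)^{d-1}$; an equivariant cochain $b$ satisfies $b(\pi\cdot c)=\pi\cdot b(c)$ for oriented cells $c$. *)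

From HB Require Import structures.
From mathcomp Require Import all_boot all_order all_algebra all_fingroup.
Set Implicit Arguments. Unset Strict Implicit. Unset Printing Implicit Defensive.
Import GRing.Theory Num.Theory.

(* Strings (sigma_1 <_{i_1} ... <_{i_{n-1}} sigma_n):
   sigma : 'S_n maps positions (0-based) to letters, so sigma k = letter at
   position k; i k (k < n-1, 0-based) is the label between positions k, k+1. *)

Definition pos (n : nat) (s : 'S_n) (a : 'I_n) : nat := s^-1%g a.

Definition before (n : nat) (s : 'S_n) (a b : 'I_n) : bool := pos s a < pos s b.

Definition mval (n : nat) (s : 'S_n) (i : nat -> nat) (a b : 'I_n) : nat :=
  let p := minn (pos s a) (pos s b) in
  let q := maxn (pos s a) (pos s b) in
  \big[minn/ i p]_(p <= k < q) i k.

Definition face (n : nat) (s : 'S_n) (i : nat -> nat) (s' : 'S_n) (i' : nat -> nat)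
  : bool :=
  [forall a : 'I_n, forall b : 'I_n, before s' a b ==>
     ((before s a b && (mval s i a b <= mval s' i' a b))
      || (before s b a && (mval s i a b < mval s' i' a b)))].

(* labels of the M-cell (all d) and of the (M-1)-cell with d-1 at gap j *)
Definition topLab (d : nat) : nat -> nat := fun _ => d.
Definition subLab (d : nat) (j : nat) : nat -> nat :=
  fun k => if k == j then d.-1 else d.

(* (M-1)-cells: pairs (sigma, j), j : 'I_(n-1) the (0-based) gap carrying d-1. *)
Definition subcell (n : nat) := ('S_n * 'I_n.-1)%type.

(* Action pi.(sigma, i) = (pi sigma, i): letters relabelled by pi, i.e.
   the new string has letter pi (sigma k) at position k. *)
Definition act_perm (n : nat) (pi s : 'S_n) : 'S_n := (s * pi)%g.

Definition sgnd (d n : nat) (pi : 'S_n) : int := ((-1) ^+ (odd_perm pi * d.-1))%R.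

(* Oriented (M-1)-cells: (r, c) with r = true meaning c with the opposite of
   its chosen orientation.  The action of S_n changes the chosen orientations
   by sgn^(d-1). *)
Definition ocell (n : nat) := (bool * subcell n)%type.

Definition act_ocell (d n : nat) (pi : 'S_n) (oc : ocell n) : ocell n :=
  (oc.1 (+) (odd_perm pi && odd d.-1), (act_perm pi oc.2.1, oc.2.2)).

(* Value of a cochain (given on chosen orientations) on an oriented cell *)
Definition ceval (n : nat) (b : subcell n -> int) (oc : ocell n) : int :=
  ((-1) ^+ oc.1 * b oc.2)%R.

Definition equivariant (d n : nat) (b : subcell n -> int) : Prop :=
  forall (pi : 'S_n) (oc : ocell n),
    ceval b (act_ocell d pi oc) = (sgnd d pi * ceval b oc)%R.

(* Coboundary on the (chosen-oriented) M-cell c(sigma'_1 <_d ... <_d sigma'_n):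
   the boundary is the sum, with coefficient +1, of the (M-1)-cells which are
   faces of it. *)
Definition cobound (d n : nat) (b : subcell n -> int) (s' : 'S_n) : int :=
  (\sum_(c : subcell n | face c.1 (subLab d c.2) s' (topLab d)) b c)%R.

From HB Require Import structures.
From mathcomp Require Import all_boot all_order all_algebra all_fingroup.
Import GRing.Theory Num.Theory.
Set Implicit Arguments. Unset Strict Implicit.

(* 1. Equivariance forces b(sigma, j) = b(1, j) for every sigma: the action
      of sigma sends the cell (1, j) to (sigma, j) and changes the orientation
      and the value in Z by the same sign sgn(sigma)^(d-1).
   2. The face relation between the (M-1)-cell (s, j) (label d-1 at gap j)
      and the M-cell s' (all labels d) reduces to a combinatorial condition:
      s is the (j+1, n-j-1)-shuffle of s' in which the first j+1 positions
      of s hold a set L of letters, each block listed in the order of s'.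
   3. Such faces are in bijection with the (j+1)-subsets L of letters, so the
      M-cell s' has exactly C(n, j+1) faces at gap j.
   Summing b over the faces of s' gap by gap then gives
   delta b (s') = sum_j b(1, j) * C(n, j+1). *)

Lemma equivariant_gap_const (d n : nat) (b : subcell n -> int)
  (hb : equivariant d b) (s : 'S_n) (j : 'I_n.-1) : b (s, j) = b (1%g, j).
Proof.
have := hb s (false, (1%g, j)).
rewrite /ceval /act_ocell /sgnd /act_perm /= mul1g mul1r -[in RHS]signr_odd oddM.
case: (odd_perm s); case: (odd d.-1); rewrite /= ?expr0 ?expr1 ?mul1r ?mulN1r //.
by move=> E; rewrite -[LHS]opprK E opprK.
Qed.

Lemma bigmin_le (r : seq nat) (F : nat -> nat) (idx x : nat) :
  x \in r -> \big[minn/idx]_(k <- r) F k <= F x.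
Proof.
elim: r => [|y r IH] //; rewrite in_cons big_cons.
case/orP=> [/eqP->|/IH le_rx]; first exact: geq_minl.
exact: leq_trans (geq_minr _ _) le_rx.
Qed.

Lemma mval_top (n d : nat) (s : 'S_n) (a b : 'I_n) : mval s (topLab d) a b = d.
Proof. by rewrite /mval; elim/big_ind: _ => // x y -> ->; rewrite minnn. Qed.

Lemma mval_sub_le (n d j : nat) (s : 'S_n) (a b : 'I_n) :
  mval s (subLab d j) a b <= d.
Proof.
rewrite /mval; elim/big_ind: _ => [||k _].
- by rewrite /subLab; case: ifP => // _; apply: leq_pred.
- by move=> x y le_xd _; rewrite geq_min le_xd.
- by rewrite /subLab; case: ifP => // _; apply: leq_pred.
Qed.

Lemma mval_sub_lt (n d j : nat) (s : 'S_n) (a b : 'I_n) : 0 < d ->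
  pos s a < pos s b ->
  (mval s (subLab d j) a b < d) = (pos s a <= j < pos s b).
Proof.
move=> d_gt0 ab; rewrite /mval (minn_idPl (ltnW ab)) (maxn_idPr (ltnW ab)).
case jab: (pos s a <= j < pos s b).
  have := @bigmin_le (index_iota (pos s a) (pos s b)) (subLab d j)
            (subLab d j (pos s a)) j.
  rewrite mem_index_iota jab => /(_ isT) /leq_ltn_trans; apply.
  by rewrite /subLab eqxx prednK.
apply/negbTE; rewrite -leqNgt big_seq.
elim/big_ind: _ => [||k].
- by rewrite /subLab; case: eqP => // E; move: jab; rewrite -E leqnn ab.
- by move=> x y le_dx le_dy; rewrite leq_min le_dx.
- rewrite mem_index_iota => k_ab; rewrite /subLab; case: eqP => // E.
  by move: jab; rewrite -E k_ab.
Qed.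

Definition shuffle_face (n j : nat) (s s' : 'S_n) : bool :=
  [forall a : 'I_n, forall b : 'I_n, before s' a b ==>
     (before s a b || ((pos s b <= j) && (j < pos s a)))].

Lemma faceE (n d j : nat) (s s' : 'S_n) : 0 < d ->
  face s (subLab d j) s' (topLab d) = shuffle_face j s s'.
Proof.
move=> d_gt0; apply: eq_forallb => a; apply: eq_forallb => b.
case: (before s' a b) => //=.
rewrite mval_top mval_sub_le andbT /before.
case: (ltngtP (pos s a) (pos s b)) => //= ba.
- by rewrite /mval minnC maxnC mval_sub_lt.
- by rewrite ba; case: leqP.
Qed.

Lemma before_irr (n : nat) (s : 'S_n) (a : 'I_n) : before s a a = false.
Proof. by rewrite /before ltnn. Qed.

Lemma before_trans (n : nat) (s : 'S_n) (a b c : 'I_n) :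
  before s a b -> before s b c -> before s a c.
Proof. exact: ltn_trans. Qed.

Lemma before_total (n : nat) (s : 'S_n) (a b : 'I_n) :
  a != b -> before s a b || before s b a.
Proof.
move=> ab; rewrite /before /pos; case: ltngtP => // E.
by move: ab; rewrite (perm_inj (val_inj E)) eqxx.
Qed.

Definition rank_in (n : nat) (s' : 'S_n) (A : {set 'I_n}) (a : 'I_n) : nat :=
  #|[set c in A | before s' c a]|.

Lemma rank_in_lt (n : nat) (s' : 'S_n) (A : {set 'I_n}) (a : 'I_n) :
  a \in A -> rank_in s' A a < #|A|.
Proof.
move=> aA; apply: proper_card; apply/properP; split.
  by apply/subsetP => c; rewrite inE => /andP[].
by exists a => //; rewrite inE before_irr andbF.
Qed.

Lemma rank_in_mono (n : nat) (s' : 'S_n) (A : {set 'I_n}) (a b : 'I_n) :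
  a \in A -> before s' a b -> rank_in s' A a < rank_in s' A b.
Proof.
move=> aA ab; apply: proper_card; apply/properP; split.
  apply/subsetP => c; rewrite !inE => /andP[-> /before_trans]; exact.
by exists a; rewrite !inE ?aA ?ab // before_irr andbF.
Qed.

(* Position of a in the shuffle of s' putting the letters of L first. *)
Definition shuffle_pos (n : nat) (s' : 'S_n) (L : {set 'I_n}) (a : 'I_n) : nat :=
  if a \in L then rank_in s' L a else #|L| + rank_in s' (~: L) a.

Lemma shuffle_pos_in (n : nat) (s' : 'S_n) (L : {set 'I_n}) (a : 'I_n) :
  a \in L -> shuffle_pos s' L a < #|L|.
Proof. by move=> aL; rewrite /shuffle_pos aL rank_in_lt. Qed.

Lemma shuffle_pos_out (n : nat) (s' : 'S_n) (L : {set 'I_n}) (a : 'I_n) :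
  a \notin L -> #|L| <= shuffle_pos s' L a.
Proof. by move=> /negbTE aL; rewrite /shuffle_pos aL leq_addr. Qed.

Lemma shuffle_pos_lt (n : nat) (s' : 'S_n) (L : {set 'I_n}) (a : 'I_n) :
  shuffle_pos s' L a < n.
Proof.
case aL: (a \in L).
  by apply: leq_trans (shuffle_pos_in s' aL) (leq_trans (max_card _) _); rewrite card_ord.
have cardC := cardsC L; rewrite card_ord in cardC.
rewrite /shuffle_pos aL; apply: leq_trans (eq_leq cardC).
by rewrite ltn_add2l rank_in_lt // inE aL.
Qed.

Lemma shuffle_pos_mono (n : nat) (s' : 'S_n) (L : {set 'I_n}) (a b : 'I_n) :
  before s' a b -> (a \in L) = (b \in L) -> shuffle_pos s' L a < shuffle_pos s' L b.
Proof.
move=> ab E; rewrite /shuffle_pos -E; case aL: (a \in L); first exact: rank_in_mono.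
by rewrite ltn_add2l rank_in_mono // inE aL.
Qed.

Lemma shuffle_pos_inj (n : nat) (s' : 'S_n) (L : {set 'I_n}) :
  injective (shuffle_pos s' L).
Proof.
move=> a b E; apply/eqP; apply/negPn/negP => ab.
have split_blocks x y : x \in L -> y \notin L -> shuffle_pos s' L x < shuffle_pos s' L y.
  by move=> xL yL; apply: leq_trans (shuffle_pos_in s' xL) (shuffle_pos_out s' yL).
have same_block : (a \in L) = (b \in L).
  case aL: (a \in L); case bL: (b \in L) => //.
  - by have := split_blocks a b aL (negbT bL); rewrite E ltnn.
  - by have := split_blocks b a bL (negbT aL); rewrite E ltnn.
case/orP: (before_total s' ab) => /(shuffle_pos_mono (L := L));
  by rewrite same_block E ltnn => /(_ erefl).
Qed.

(* The shuffle as a permutation: it sends position k to the letter a with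
   shuffle_pos a = k, so that pos (shuffle_perm s' L) = shuffle_pos s' L. *)
Definition shuffle_ord (n : nat) (s' : 'S_n) (L : {set 'I_n}) (a : 'I_n) : 'I_n :=
  Ordinal (shuffle_pos_lt s' L a).

Lemma shuffle_ord_inj (n : nat) (s' : 'S_n) (L : {set 'I_n}) :
  injective (shuffle_ord s' L).
Proof. by move=> a b /(congr1 val) /shuffle_pos_inj. Qed.

Definition shuffle_perm (n : nat) (s' : 'S_n) (L : {set 'I_n}) : 'S_n :=
  ((perm (@shuffle_ord_inj n s' L))^-1)%g.

Lemma pos_shuffle_perm (n : nat) (s' : 'S_n) (L : {set 'I_n}) (a : 'I_n) :
  pos (shuffle_perm s' L) a = shuffle_pos s' L a.
Proof. by rewrite /pos /shuffle_perm invgK permE. Qed.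

Definition head_set (n j : nat) (s : 'S_n) : {set 'I_n} := [set a | pos s a <= j].

Lemma shuffle_perm_face (n j : nat) (s' : 'S_n) (L : {set 'I_n}) :
  #|L| = j.+1 -> shuffle_face j (shuffle_perm s' L) s'.
Proof.
move=> cardL; apply/forallP => a; apply/forallP => b; apply/implyP => ab.
rewrite /before !pos_shuffle_perm.
case aL: (a \in L); case bL: (b \in L); try by rewrite shuffle_pos_mono ?aL ?bL.
- have := shuffle_pos_in s' aL; have := shuffle_pos_out s' (negbT bL).
  by rewrite cardL => le_jb lt_aj; rewrite (leq_trans lt_aj le_jb).
- have := shuffle_pos_in s' bL; have := shuffle_pos_out s' (negbT aL).
  by rewrite cardL ltnS => le_ja le_bj; rewrite le_bj le_ja orbT.
Qed.

Lemma head_set_shuffle_perm (n j : nat) (s' : 'S_n) (L : {set 'I_n}) :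
  #|L| = j.+1 -> head_set j (shuffle_perm s' L) = L.
Proof.
move=> cardL; apply/setP => a; rewrite inE pos_shuffle_perm.
case aL: (a \in L); first by rewrite -ltnS -cardL shuffle_pos_in.
by apply/negbTE; rewrite -ltnNge -ltnS -cardL; apply: shuffle_pos_out; rewrite aL.
Qed.

Lemma card_pos_lt (n : nat) (s : 'S_n) (k : nat) :
  k <= n -> #|[set a | pos s a < k]| = k.
Proof.
move=> kn; have -> : [set a | pos s a < k] = [set s (widen_ord kn i) | i : 'I_k].
  apply/setP => a; rewrite inE; apply/idP/imsetP => [a_k | [i _ ->]].
    by exists (Ordinal a_k) => //; apply: (canRL (permKV s)); apply: val_inj.
  by rewrite /pos permK /= ltn_ord.
rewrite card_imset ?card_ord // => x y /perm_inj /(congr1 val) /= E.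
exact: val_inj.
Qed.

Lemma card_head_set (n j : nat) (s : 'S_n) : j < n -> #|head_set j s| = j.+1.
Proof.
by move=> jn; rewrite -(card_pos_lt s jn); apply: eq_card => a; rewrite !inE.
Qed.

Lemma shuffle_face_block_order (n j : nat) (s s' : 'S_n) (a b : 'I_n) :
  shuffle_face j s s' -> (pos s a <= j) = (pos s b <= j) ->
  before s a b = before s' a b.
Proof.
move=> /forallP sh same_block.
have kept x y : (pos s x <= j) = (pos s y <= j) -> before s' x y -> before s x y.
  move=> same_xy /(implyP (forallP (sh x) y)) /orP[//|/andP[le_yj lt_jx]].
  by move: same_xy; rewrite le_yj leqNgt lt_jx.
case ab': (before s' a b); first exact: kept.
apply/negbTE/negP => ab.
have a_neq_b : a != b by apply: contraTneq ab => ->; rewrite before_irr.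
case/orP: (before_total s' a_neq_b) => [|/(kept _ _ (esym same_block)) ba].
  by rewrite ab'.
by move: (before_trans ab ba); rewrite before_irr.
Qed.

Lemma shuffle_face_pos (n j : nat) (s s' : 'S_n) (a : 'I_n) :
  shuffle_face j s s' -> pos s a = shuffle_pos s' (head_set j s) a.
Proof.
move=> sh; set H := head_set j s.
have in_H c : (c \in H) = (pos s c <= j) by rewrite inE.
have order c : (c \in H) = (a \in H) -> before s c a = before s' c a.
  by rewrite !in_H => same; exact: shuffle_face_block_order sh same.
rewrite -[LHS](@card_pos_lt n s (pos s a) (ltnW (ltn_ord _))) /shuffle_pos /rank_in.
have head_first x y : x \in H -> y \notin H -> pos s x < pos s y.
  by rewrite !in_H -ltnNge => le_xj lt_jy; apply: leq_ltn_trans le_xj lt_jy.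
case aH: (a \in H).
  apply: eq_card => c; rewrite !inE -!in_H.
  case cH: (c \in H); first by rewrite -order ?cH.
  by apply/negbTE; rewrite -leqNgt ltnW ?head_first ?cH.
rewrite -(cardsID H [set c | pos s c < pos s a]); congr (_ + _);
  apply: eq_card => c; rewrite !inE -?in_H; case cH: (c \in H);
  rewrite ?andbT ?andbF //=.
- by apply: head_first; rewrite ?cH ?aH.
- by rewrite -order ?cH ?aH.
Qed.

Lemma shuffle_face_eq (n j : nat) (s s' : 'S_n) :
  shuffle_face j s s' -> s = shuffle_perm s' (head_set j s).
Proof.
move=> sh; apply: invg_inj; apply/permP => a; apply: val_inj.
by have := pos_shuffle_perm s' (head_set j s) a; rewrite /pos -(shuffle_face_pos a sh).
Qed.

(* Faces of s' at gap j correspond to (j+1)-subsets of letters. *)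
Lemma card_shuffle_faces (n j : nat) (s' : 'S_n) :
  j < n -> #|[set s : 'S_n | shuffle_face j s s']| = 'C(n, j.+1).
Proof.
move=> jn.
have -> : [set s : 'S_n | shuffle_face j s s'] =
          [set shuffle_perm s' L | L in [set L : {set 'I_n} | #|L| == j.+1]].
  apply/setP => s; rewrite inE; apply/idP/imsetP => [sh | [L]].
    by exists (head_set j s); rewrite ?inE ?card_head_set //; apply: shuffle_face_eq.
  by rewrite inE => /eqP cardL ->; apply: shuffle_perm_face.
rewrite card_in_imset ?card_draws ?card_ord // => L1 L2.
rewrite !inE => /eqP card1 /eqP card2 E.
by rewrite -(head_set_shuffle_perm s' card1) E head_set_shuffle_perm.
Qed.

Lemma cobound_gapwise (d n : nat) (b : subcell n -> int) (x : 'I_n.-1 -> int)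
  (s' : 'S_n) : 0 < d -> (forall (s : 'S_n) (j : 'I_n.-1), b (s, j) = x j) ->
  cobound d b s' = (\sum_(j < n.-1) x j * ('C(n, j.+1))%:Z)%R.
Proof.
move=> d_gt0 bx; rewrite /cobound (eq_bigr (fun c => x c.2)); last by case=> s j _.
rewrite -(pair_big_dep xpredT (fun s (j : 'I_n.-1) => face s (subLab d j) s' (topLab d))
   (fun _ j => x j)) /= (exchange_big_dep xpredT) //=; apply: eq_bigr => j _.
rewrite (eq_bigl (fun s => s \in [set s : 'S_n | shuffle_face j s s'])); last first.
  by move=> s; rewrite inE faceE.
rewrite sumr_const card_shuffle_faces; last by rewrite (leq_trans (ltn_ord j)) ?leq_pred.
by rewrite -mulr_natr natz.
Qed.

Theorem lemma4p2 (d n : nat) (hd : (2 <= d)%N) (hn : (2 <= n)%N)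
  (b : subcell n -> int) (hb : equivariant d b) :
  exists x : 'I_n.-1 -> int,
    (forall (s : 'S_n) (j : 'I_n.-1), b (s, j) = x j) /\
    (forall s' : 'S_n,
       cobound d b s' = (\sum_(j < n.-1) x j * ('C(n, j.+1))%:Z)%R).
Proof.
have b_gapwise := equivariant_gap_const hb.
exists (fun j => b (1%g, j)); split=> // s'.
by apply: cobound_gapwise b_gapwise; apply: leq_trans hd.
Qed.
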